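(* For every integer $n>0$ there is a normal proof of $\varphi_n$ in Prawitz-style Natural Deduction for $\mathbf{M}_{\rightarrow}$ that has exactly $2^n$ assumption occurrences of the formula $\xi_n$, all of which are discharged by the last inference (an $\rightarrow$-Introduction) of the proof.
   Context: $\mathbf{M}_{\rightarrow}$ is purely implicational minimal propositional logic: formulas are built from propositional letters using only $\rightarrow$; there is no $\bot$. Its Natural Deduction system (Prawitz style) has only two rules: $\rightarrow$-Introduction (from a derivation of $\beta$, possibly using assumptions $\alpha$, infer $\alpha\rightarrow\beta$, discharging any number, possibly zero, of occurrences of the assumption $\alpha$) and $\rightarrow$-Elimination (from $\alpha$ and $\alpha\rightarrow\beta$ infer $\beta$; $\alpha\rightarrow\beta$ is the major premise). A proof is a derivation with no open assumptions. A derivation is normal if no formula occurrence is both the conclusion of an $\rightarrow$-Introduction and the major premise of an $\rightarrow$-Elimination. An assumption occurrence is a leaf of the derivation tree. For formulas $X,Y$ let $\chi[X,Y]=(((X\rightarrow Y)\rightarrow X)\rightarrow X)\rightarrow Y$. Let $C$ and $D_1,D_2,\dots$ be distinct propositional letters. Define $\xi_1=\chi[D_1,C]$, $\xi_{i+1}=\chi[D_{i+1},\xi_i]$ for $i\ge 1$, and $\varphi_i=\xi_i\rightarrow C$ for $i\ge 1$. *)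

From Stdlib Require Import List Arith PeanoNat.
Import ListNotations.

Inductive form : Type :=
| Var : nat -> form
| Imp : form -> form -> form.

Definition form_eq_dec : forall a b : form, {a = b} + {a <> b}.
Proof. decide equality; apply Nat.eq_dec. Defined.

(* Letters: C = Var 0, D_i = Var i (i >= 1); all distinct. *)
Definition C : form := Var 0.
Definition D (i : nat) : form := Var i.

Definition chi (X Y : form) : form :=
  Imp (Imp (Imp (Imp X Y) X) X) Y.

(* xi 1 = chi[D_1, C],  xi (i+1) = chi[D_(i+1), xi i]  (xi 0 is an unused dummy) *)
Fixpoint xi (n : nat) : form :=
  match n with
  | 0 => C
  | S k => chi (D (S k)) (match k with 0 => C | _ => xi k end)
  end.

Definition phi (n : nat) : form := Imp (xi n) C.

(* A leaf [Hyp a x] is an assumption occurrence of [a]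
   with discharge label [x].  [ImpI a x d] is ->-Introduction concluding
   [a -> concl d] and discharging exactly the open occurrences of [a] in [d]
   carrying label [x] (so any number, possibly zero, of occurrences of [a]
   can be discharged).  [ImpE d1 d2] is ->-Elimination with minor premise
   [d1] and major premise [d2]. *)
Inductive deriv : Type :=
| Hyp  : form -> nat -> deriv
| ImpI : form -> nat -> deriv -> deriv
| ImpE : deriv -> deriv -> deriv.

Fixpoint concl (d : deriv) : form :=
  match d with
  | Hyp a _ => a
  | ImpI a _ d => Imp a (concl d)
  | ImpE _ d2 => match concl d2 with Imp _ b => b | f => f end
  end.

Fixpoint valid (d : deriv) : Prop :=
  match d with
  | Hyp _ _ => True
  | ImpI _ _ d => valid d
  | ImpE d1 d2 => valid d1 /\ valid d2 /\ concl d2 = Imp (concl d1) (concl d)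
  end.

Definition ax_eqb (p q : form * nat) : bool :=
  if form_eq_dec (fst p) (fst q) then Nat.eqb (snd p) (snd q) else false.

Fixpoint open_ass (d : deriv) : list (form * nat) :=
  match d with
  | Hyp a x => [(a, x)]
  | ImpI a x d => filter (fun p => negb (ax_eqb p (a, x))) (open_ass d)
  | ImpE d1 d2 => open_ass d1 ++ open_ass d2
  end.

Definition is_proof (d : deriv) : Prop := valid d /\ open_ass d = [].

Fixpoint normal (d : deriv) : Prop :=
  match d with
  | Hyp _ _ => True
  | ImpI _ _ d => normal d
  | ImpE d1 d2 =>
      normal d1 /\ normal d2 /\
      match d2 with ImpI _ _ _ => False | _ => True end
  end.

Fixpoint count_ass (a : form) (d : deriv) : nat :=
  match d with
  | Hyp b _ => if form_eq_dec a b then 1 else 0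
  | ImpI _ _ d => count_ass a d
  | ImpE d1 d2 => count_ass a d1 + count_ass a d2
  end.

Definition count_open (a : form) (x : nat) (d : deriv) : nat :=
  length (filter (fun p => ax_eqb p (a, x)) (open_ass d)).

(** An assumption [chi[X,Y]] can be used twice to derive [Y]: from [X] and
    [chi[X,Y]] one gets [Y], hence [X -> Y]; applied to the assumption
    [(X -> Y) -> X] this gives [X], hence [((X -> Y) -> X) -> X], and a
    second use of [chi[X,Y]] yields [Y].  Every other assumption of the
    derivation of [chi[X,Y]] is therefore duplicated.  Since
    [xi (k+1) = chi[D (k+1), xi k]], iterating this step from the single
    assumption [xi n] down to [xi 0 = C] doubles the assumptions [xi n]
    [n] times; as every major premise is an assumption or an elimination,
    the result is normal. *)

From Stdlib Require Import List Arith Lia.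
Import ListNotations.

Lemma filter_repeat {A : Type} (f : A -> bool) (x : A) (m : nat) :
  filter f (repeat x m) = if f x then repeat x m else [].
Proof.
  induction m as [|m IH]; simpl; [now destruct (f x)|].
  rewrite IH; now destruct (f x).
Qed.

Lemma ax_eqb_refl (p : form * nat) : ax_eqb p p = true.
Proof.
  destruct p as [a x]; unfold ax_eqb; simpl.
  destruct (form_eq_dec a a); [apply Nat.eqb_refl | congruence].
Qed.

Lemma ax_eqb_label_neq (a b : form) (x y : nat) :
  x <> y -> ax_eqb (a, x) (b, y) = false.
Proof.
  intro Hxy; unfold ax_eqb; simpl.
  destruct (form_eq_dec a b); [now apply Nat.eqb_neq | reflexivity].
Qed.

Lemma xi_S (k : nat) : xi (S k) = chi (D (S k)) (xi k).
Proof. now destruct k. Qed.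

Definition not_intro (d : deriv) : Prop :=
  match d with ImpI _ _ _ => False | _ => True end.

Section DoubleUse.

Variables (X Y : form) (t : deriv).

(* Labels 1, 2, 3 are used for the discharges inside, so that the open
   assumptions of [t], which carry label 0, are never captured. *)
Definition double_use : deriv :=
  let U := Imp (Imp X Y) X in
  ImpE (ImpI U 1 (ImpE (ImpI X 2 (ImpE (ImpI U 3 (Hyp X 2)) t)) (Hyp U 1))) t.

Hypothesis concl_t : concl t = chi X Y.

Lemma concl_double_use : concl double_use = Y.
Proof. simpl; now rewrite concl_t. Qed.

Lemma valid_double_use : valid t -> valid double_use.
Proof. intro Ht; simpl; rewrite concl_t; tauto. Qed.

Lemma normal_double_use : normal t -> not_intro t -> normal double_use.
Proof. intros Hn Hi; repeat split; assumption. Qed.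

Lemma open_ass_double_use (A : form) (m : nat) :
  open_ass t = repeat (A, 0) m -> open_ass double_use = repeat (A, 0) (2 * m).
Proof.
  intro Ht; simpl; rewrite Ht, !filter_app, !filter_repeat.
  rewrite !ax_eqb_label_neq by discriminate; simpl.
  rewrite !ax_eqb_refl; simpl.
  rewrite filter_repeat, ax_eqb_label_neq by discriminate; simpl.
  rewrite app_nil_r, <- repeat_app; f_equal; lia.
Qed.

Lemma count_ass_double_use (A : form) :
  A <> X -> A <> Imp (Imp X Y) X ->
  count_ass A double_use = 2 * count_ass A t.
Proof.
  intros HX HU; simpl.
  destruct (form_eq_dec A X); [contradiction|].
  destruct (form_eq_dec A (Imp (Imp X Y) X)); [contradiction|].
  lia.
Qed.

End DoubleUse.

Fixpoint tower (k j : nat) : deriv :=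
  match j with
  | 0 => Hyp (xi k) 0
  | S j => double_use (D (S k)) (xi k) (tower (S k) j)
  end.

Lemma concl_tower (k j : nat) : concl (tower k j) = xi k.
Proof.
  revert k; induction j as [|j IH]; intro k; [reflexivity|].
  apply concl_double_use; now rewrite IH, xi_S.
Qed.

Lemma valid_tower (k j : nat) : valid (tower k j).
Proof.
  revert k; induction j as [|j IH]; intro k; [exact I|].
  apply valid_double_use; [now rewrite concl_tower, xi_S | apply IH].
Qed.

Lemma normal_tower (k j : nat) : normal (tower k j).
Proof.
  revert k; induction j as [|j IH]; intro k; [exact I|].
  apply normal_double_use; [apply IH | now destruct j].
Qed.

Lemma open_ass_tower (k j : nat) :
  open_ass (tower k j) = repeat (xi (k + j), 0) (2 ^ j).
Proof.
  revert k; induction j as [|j IH]; intro k.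
  - now rewrite Nat.add_0_r.
  - cbn [tower]; rewrite <- Nat.add_succ_comm, Nat.pow_succ_r'.
    now apply open_ass_double_use.
Qed.

Lemma count_ass_tower (k j : nat) : count_ass (xi (k + j)) (tower k j) = 2 ^ j.
Proof.
  revert k; induction j as [|j IH]; intro k.
  - rewrite Nat.add_0_r; simpl; now destruct (form_eq_dec (xi k) (xi k)).
  - cbn [tower]; rewrite <- Nat.add_succ_comm, Nat.pow_succ_r'.
    rewrite count_ass_double_use, IH; [reflexivity | ..];
      rewrite Nat.add_succ_l, xi_S; unfold chi, D; congruence.
Qed.

Theorem mainTheorem2 : forall n : nat, 0 < n ->
  exists (x : nat) (d0 : deriv),
    is_proof (ImpI (xi n) x d0) /\
    concl (ImpI (xi n) x d0) = phi n /\
    normal (ImpI (xi n) x d0) /\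
    count_ass (xi n) (ImpI (xi n) x d0) = 2 ^ n /\
    count_open (xi n) x d0 = 2 ^ n.
Proof.
  (* The construction works for [n = 0] as well, since [xi 0 = C]. *)
  intros n _.
  exists 0, (tower 0 n).
  unfold is_proof, count_open; simpl.
  rewrite open_ass_tower, !filter_repeat, ax_eqb_refl; simpl.
  repeat split.
  - apply valid_tower.
  - now rewrite concl_tower.
  - apply normal_tower.
  - apply (count_ass_tower 0 n).
  - apply repeat_length.
Qed.
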